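(* Let $\ell>0$ and let $M$ have local coordinates $(x,y,\alpha,\beta)$ with $\cos\alpha\neq0$, $\cos\beta\neq0$. Let $X_3=\partial_\beta$ and $X_4=-\sin\beta\,\partial_\alpha+\ell\cos\beta(\cos\alpha\,\partial_x+\sin\alpha\,\partial_y)$. Then the change of coordinates $(x,y,\alpha,\beta)\mapsto(x,y,p,q)$ with $p=\tan\alpha$, $q=-\ell^{-1}\tan\beta\sec^3\alpha$ is a local diffeomorphism which maps $\mathrm{Span}(X_3)$ to $\mathrm{Span}(\partial_q)$ and $\mathrm{Span}(X_4)$ to $\mathrm{Span}\big(\partial_x+p\partial_y+q\partial_p+\tfrac{3pq^2}{1+p^2}\partial_q\big)$. Consequently, the Engel structure with a split $(M,\mathrm{Span}(X_3)\oplus\mathrm{Span}(X_4))$ is locally equivalent to the Engel structure with a split on the second jet space $\mathcal{J}^2$ (coordinates $(x,y,p=y',q=y'')$) associated with the third order ODE $y'''=\frac{3y'y''^2}{1+y'^2}$, given by the vertical direction $\partial_q$ and the total derivative direction of the equation; and the general solution of this ODE is $\nu(x^2+y^2)-2\xi x-2\eta y+\mu=0$ with real constants $\nu,\xi,\eta,\mu$, i.e. its solution graphs are circles and straight lines in the $(x,y)$-plane.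
   Context: An Engel structure with a split is a 4-manifold with a rank 2 distribution $\mathcal{D}$ whose derived flag has constant ranks $2,3,4$, together with a splitting $\mathcal{D}=\mathcal{D}_1\oplus\mathcal{D}_2$ into rank one subdistributions; two such are locally equivalent if a local diffeomorphism carries $\mathcal{D}_1$ to $\bar{\mathcal{D}}_1$ and $\mathcal{D}_2$ to $\bar{\mathcal{D}}_2$. For an ODE $y'''=F(x,y,y',y'')$ on $\mathcal{J}^2$ with coordinates $(x,y,p,q)$, the associated split is $\mathrm{Span}(\partial_q)\oplus\mathrm{Span}(\partial_x+p\partial_y+q\partial_p+F\partial_q)$. *)

From Stdlib Require Import Reals List.
From Coquelicot Require Import Coquelicot.
Open Scope R_scope.

Definition pt := (R * R * R * R)%type.

Inductive idx := I1 | I2 | I3 | I4.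

Definition coord (p : pt) (i : idx) : R :=
  let '(a, b, c, d) := p in
  match i with I1 => a | I2 => b | I3 => c | I4 => d end.

Definition upd (p : pt) (i : idx) (t : R) : pt :=
  let '(a, b, c, d) := p in
  match i with
  | I1 => (t, b, c, d) | I2 => (a, t, c, d)
  | I3 => (a, b, t, d) | I4 => (a, b, c, t) end.

Definition vec4 (f : idx -> R) : pt := (f I1, f I2, f I3, f I4).

Definition pd (i : idx) (f : pt -> R) : pt -> R :=
  fun p => Derive (fun t => f (upd p i t)) (coord p i).

Fixpoint iter_pd (ds : list idx) (f : pt -> R) : pt -> R :=
  match ds with nil => f | i :: ds' => pd i (iter_pd ds' f) end.

Definition smooth_on (U : pt -> Prop) (f : pt -> R) : Prop :=
  forall (ds : list idx) (p : pt), U p ->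
    continuous (iter_pd ds f) p /\
    (forall i, ex_derive (fun t => iter_pd ds f (upd p i t)) (coord p i)).

Definition smooth_map_on (U : pt -> Prop) (F : pt -> pt) : Prop :=
  forall k, smooth_on U (fun p => coord (F p) k).

Definition push (F : pt -> pt) (m v : pt) : pt :=
  vec4 (fun k =>
    coord v I1 * pd I1 (fun q => coord (F q) k) m +
    coord v I2 * pd I2 (fun q => coord (F q) k) m +
    coord v I3 * pd I3 (fun q => coord (F q) k) m +
    coord v I4 * pd I4 (fun q => coord (F q) k) m).

Definition scal4 (t : R) (v : pt) : pt := vec4 (fun k => t * coord v k).

Definition same_span (v w : pt) : Prop :=
  forall u, (exists t, u = scal4 t v) <-> (exists t, u = scal4 t w).

Definition local_diffeo (V W : pt -> Prop) (F G : pt -> pt) : Prop :=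
  open V /\ open W /\
  (forall p, V p -> W (F p)) /\ (forall q, W q -> V (G q)) /\
  (forall p, V p -> G (F p) = p) /\ (forall q, W q -> F (G q) = q) /\
  smooth_map_on V F /\ smooth_map_on W G.

Definition carries_split (V : pt -> Prop) (F : pt -> pt) (X1 X2 Y1 Y2 : pt -> pt) : Prop :=
  forall m, V m ->
    same_span (push F m (X1 m)) (Y1 (F m)) /\ same_span (push F m (X2 m)) (Y2 (F m)).

Definition loc_equiv_split (U : pt -> Prop) (X1 X2 : pt -> pt)
    (Ubar : pt -> Prop) (Y1 Y2 : pt -> pt) : Prop :=
  forall m, U m -> exists V W F G,
    V m /\ (forall p, V p -> U p) /\ (forall q, W q -> Ubar q) /\
    local_diffeo V W F G /\ carries_split V F X1 X2 Y1 Y2.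

Definition Mdom (m : pt) : Prop := cos (coord m I3) <> 0 /\ cos (coord m I4) <> 0.

Definition X3 (m : pt) : pt := (0, 0, 0, 1).

Definition X4 (l : R) (m : pt) : pt :=
  let al := coord m I3 in let be := coord m I4 in
  (l * cos be * cos al, l * cos be * sin al, - sin be, 0).

Definition Phi (l : R) (m : pt) : pt :=
  let al := coord m I3 in let be := coord m I4 in
  (coord m I1, coord m I2, tan al, - / l * tan be * (/ cos al) ^ 3).

Definition J2 (n : pt) : Prop := True.

Definition vert (n : pt) : pt := (0, 0, 0, 1).

Definition totD (F : pt -> R) (n : pt) : pt := (1, coord n I3, coord n I4, F n).

Definition Fode (n : pt) : R :=
  let p := coord n I3 in let q := coord n I4 in 3 * p * q ^ 2 / (1 + p ^ 2).

Definition C3_on (a b : Rbar) (y : R -> R) : Prop :=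
  forall x : R, Rbar_lt a x -> Rbar_lt x b ->
    ex_derive_n y 1 x /\ ex_derive_n y 2 x /\ ex_derive_n y 3 x.

Definition solves_ode (F : pt -> R) (a b : Rbar) (y : R -> R) : Prop :=
  C3_on a b y /\
  forall x : R, Rbar_lt a x -> Rbar_lt x b ->
    Derive_n y 3 x = F (x, y x, Derive_n y 1 x, Derive_n y 2 x).

From Stdlib Require Import Reals List Lra Classical.
From Coquelicot Require Import Coquelicot.
Open Scope R_scope.

(** The coordinates of [Phi] and of its explicit inverse, built from [atan] on a box where
    [alpha] and [beta] stay in one branch of [tan], are elementary expressions. Partial
    derivatives of elementary expressions are again elementary, so both maps are smooth.
    Pushing [X3] and [X4] forward is a direct computation, giving a nonzero multiple of
    [d_q] and [l cos beta cos alpha] times the total derivative direction of the ODE.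

    For the ODE, [y'''(1 + y'^2) = 3 y' y''^2] says exactly that the curvature
    [y'' / (1 + y'^2)^(3/2)] of the graph is constant. Zero curvature gives a line.
    Otherwise the centre of curvature [(x - y'(1 + y'^2)/y'', y + (1 + y'^2)/y'')] is
    constant, and the graph lies on the circle of radius [1/|curvature|] around it.
    Conversely, differentiating the equation of a circle or line three times and
    eliminating the constants gives back the ODE. *)

(** * Elementary expressions and their smoothness *)

Inductive fexpr :=
  | FConst (c : R) | FVar (i : idx)
  | FAdd (e1 e2 : fexpr) | FMul (e1 e2 : fexpr)
  | FSin (e : fexpr) | FCos (e : fexpr) | FInv (e : fexpr) | FAtan (e : fexpr).

Fixpoint feval (e : fexpr) (p : pt) : R :=
  match e with
  | FConst c => c
  | FVar i => coord p i
  | FAdd e1 e2 => feval e1 p + feval e2 p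
  | FMul e1 e2 => feval e1 p * feval e2 p
  | FSin e => sin (feval e p)
  | FCos e => cos (feval e p)
  | FInv e => / feval e p
  | FAtan e => atan (feval e p)
  end.

Definition idx_eqb (i j : idx) : bool :=
  match i, j with
  | I1, I1 | I2, I2 | I3, I3 | I4, I4 => true
  | _, _ => false
  end.

Fixpoint fderiv (i : idx) (e : fexpr) : fexpr :=
  match e with
  | FConst _ => FConst 0
  | FVar j => FConst (if idx_eqb i j then 1 else 0)
  | FAdd e1 e2 => FAdd (fderiv i e1) (fderiv i e2)
  | FMul e1 e2 => FAdd (FMul (fderiv i e1) e2) (FMul e1 (fderiv i e2))
  | FSin e => FMul (FCos e) (fderiv i e)
  | FCos e => FMul (FMul (FConst (-1)) (FSin e)) (fderiv i e)
  | FInv e => FMul (FMul (FConst (-1)) (FMul (FInv e) (FInv e))) (fderiv i e)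
  | FAtan e => FMul (FInv (FAdd (FConst 1) (FMul e e))) (fderiv i e)
  end.

Definition fderivs (ds : list idx) (e : fexpr) : fexpr := fold_right fderiv e ds.

Fixpoint fdefined (e : fexpr) (p : pt) : Prop :=
  match e with
  | FConst _ | FVar _ => True
  | FAdd e1 e2 | FMul e1 e2 => fdefined e1 p /\ fdefined e2 p
  | FSin e | FCos e | FAtan e => fdefined e p
  | FInv e => feval e p <> 0 /\ fdefined e p
  end.

Lemma fdefined_fderiv i e p : fdefined e p -> fdefined (fderiv i e) p.
Proof.
  induction e; simpl; intuition.
  assert (0 <= feval e p * feval e p) by nra. lra.
Qed.

Lemma fdefined_fderivs ds e p : fdefined e p -> fdefined (fderivs ds e) p.
Proof. induction ds; simpl; auto using fdefined_fderiv. Qed.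

Lemma coord_upd p i s j : coord (upd p i s) j = if idx_eqb i j then s else coord p j.
Proof. destruct p as [[[a b] c] d]; destruct i, j; reflexivity. Qed.

Lemma upd_coord p i : upd p i (coord p i) = p.
Proof. destruct p as [[[a b] c] d]; destruct i; reflexivity. Qed.

Lemma is_derive_Rplus (f g : R -> R) x df dg :
  is_derive f x df -> is_derive g x dg -> is_derive (fun s => f s + g s) x (df + dg).
Proof. intros; apply (is_derive_plus f g); auto. Qed.

Lemma is_derive_Rmult (f g : R -> R) x df dg :
  is_derive f x df -> is_derive g x dg -> is_derive (fun s => f s * g s) x (df * g x + f x * dg).
Proof.
  intros; apply (is_derive_mult f g); auto. intros; apply Rmult_comm.
Qed.

Lemma is_derive_Rcomp (f g : R -> R) x df dg :
  is_derive f (g x) df -> is_derive g x dg -> is_derive (fun s => f (g s)) x (df * dg).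
Proof.
  intros Hf Hg. rewrite Rmult_comm. apply (is_derive_comp f g); auto.
Qed.

Lemma is_derive_feval i e p t : fdefined e (upd p i t) ->
  is_derive (fun s => feval e (upd p i s)) t (feval (fderiv i e) (upd p i t)).
Proof.
  induction e; simpl; intros H.
  - exact (is_derive_const c t).
  - apply (is_derive_ext (fun s => if idx_eqb i i0 then s else coord p i0)).
    { intro s. symmetry. apply coord_upd. }
    destruct (idx_eqb i i0); [exact (is_derive_id t) | exact (is_derive_const _ t)].
  - destruct H. apply is_derive_Rplus; auto.
  - destruct H. apply is_derive_Rmult; auto.
  - apply (is_derive_Rcomp sin); auto. apply is_derive_sin.
  - replace (-1 * sin _) with (- sin (feval e (upd p i t))) by ring.
    apply (is_derive_Rcomp cos); auto. apply is_derive_cos.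
  - destruct H as [Hne H].
    replace (_ * _) with (- feval (fderiv i e) (upd p i t) / feval e (upd p i t) ^ 2)
      by (field; auto).
    apply (is_derive_inv (fun s => feval e (upd p i s))); auto.
  - apply (is_derive_Rcomp atan); auto. apply is_derive_atan.
Qed.

Lemma is_derive_feval_at i e p : fdefined e p ->
  is_derive (fun t => feval e (upd p i t)) (coord p i) (feval (fderiv i e) p).
Proof.
  intros He. pose proof (is_derive_feval i e p (coord p i)) as H.
  rewrite !upd_coord in H. auto.
Qed.

Lemma continuous_coord i p : continuous (fun q : pt => coord q i) p.
Proof.
  assert (Hfst : forall (U V : UniformSpace) (x : U * V), continuous fst x)
    by (intros; apply continuous_fst).
  assert (Hsnd : forall (U V : UniformSpace) (x : U * V), continuous snd x)
    by (intros; apply continuous_snd).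
  destruct i.
  - apply (continuous_ext (fun q : pt => fst (fst (fst q)))); [intros [[[? ?] ?] ?]; reflexivity|].
    apply (continuous_comp (fun q : pt => fst (fst q)) fst); auto.
    apply (continuous_comp fst fst); auto.
  - apply (continuous_ext (fun q : pt => snd (fst (fst q)))); [intros [[[? ?] ?] ?]; reflexivity|].
    apply (continuous_comp (fun q : pt => fst (fst q)) snd); auto.
    apply (continuous_comp fst fst); auto.
  - apply (continuous_ext (fun q : pt => snd (fst q))); [intros [[[? ?] ?] ?]; reflexivity|].
    apply (continuous_comp fst snd); auto.
  - apply (continuous_ext (fun q : pt => snd q)); [intros [[[? ?] ?] ?]; reflexivity|].
    auto.
Qed.

Lemma continuous_Rfun (f : R -> R) x : (forall y, ex_derive f y) -> continuous f x.
Proof. intros H. exact (ex_derive_continuous f x (H x)). Qed.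

Lemma continuous_feval e p : fdefined e p -> continuous (feval e) p.
Proof.
  induction e; simpl; intros H.
  - apply continuous_const.
  - apply continuous_coord.
  - destruct H. apply (continuous_plus (feval e1) (feval e2)); auto.
  - destruct H. apply (continuous_mult (feval e1) (feval e2)); auto.
  - apply (continuous_comp (feval e) sin); auto.
    apply continuous_Rfun. intro; eexists; apply is_derive_sin.
  - apply (continuous_comp (feval e) cos); auto.
    apply continuous_Rfun. intro; eexists; apply is_derive_cos.
  - destruct H. apply (continuous_comp (feval e) Rinv); auto. apply continuous_Rinv; auto.
  - apply (continuous_comp (feval e) atan); auto.
    apply continuous_Rfun. intro; eexists; apply is_derive_atan.
Qed.

Lemma pd_feval i f e p :
  (forall q, f q = feval e q) -> fdefined e p -> pd i f p = feval (fderiv i e) p.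
Proof.
  intros Hf He. unfold pd.
  rewrite (Derive_ext _ (fun t => feval e (upd p i t))) by (intro; apply Hf).
  apply is_derive_unique, is_derive_feval_at; auto.
Qed.

Lemma open_upd_locally (U : pt -> Prop) p i :
  open U -> U p -> locally (coord p i) (fun t => U (upd p i t)).
Proof.
  intros HU Hp. destruct (HU p Hp) as [eps He].
  exists eps. intros t Ht. apply He.
  destruct p as [[[a b] c] d]; destruct i; simpl in *;
    repeat split; try apply ball_center; exact Ht.
Qed.

Section SmoothFexpr.
Variables (U : pt -> Prop) (f : pt -> R) (e : fexpr).
Hypothesis U_open : open U.
Hypothesis f_feval : forall p, U p -> f p = feval e p.
Hypothesis e_defined : forall p, U p -> fdefined e p.

Lemma iter_pd_feval ds p : U p -> iter_pd ds f p = feval (fderivs ds e) p.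
Proof.
  revert p. induction ds as [|i ds IH]; simpl; intros p Hp; auto.
  unfold pd. rewrite (Derive_ext_loc _ (fun t => feval (fderivs ds e) (upd p i t))).
  - apply is_derive_unique, is_derive_feval_at, fdefined_fderivs; auto.
  - generalize (open_upd_locally U p i U_open Hp). apply filter_imp. auto.
Qed.

Lemma smooth_on_feval : smooth_on U f.
Proof.
  intros ds p Hp. split.
  - apply (continuous_ext_loc _ (feval (fderivs ds e))).
    + generalize (U_open p Hp). apply filter_imp. intros q Hq.
      symmetry. apply iter_pd_feval; auto.
    + apply continuous_feval, fdefined_fderivs; auto.
  - intro i. exists (feval (fderiv i (fderivs ds e)) p).
    apply (is_derive_ext_loc (fun t => feval (fderivs ds e) (upd p i t))).
    + generalize (open_upd_locally U p i U_open Hp). apply filter_imp. intros t Ht.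
      symmetry. apply iter_pd_feval; auto.
    + apply is_derive_feval_at, fdefined_fderivs; auto.
Qed.

End SmoothFexpr.

(** * Branches of the tangent *)

Definition tan_branch (z : Z) (a : R) : Prop := IZR z * PI - PI / 2 < a < IZR z * PI + PI / 2.

Lemma cos_IZR_PI_neq0 z : cos (IZR z * PI) <> 0.
Proof.
  intros H. pose proof (sin2_cos2 (IZR z * PI)) as Hsc.
  rewrite H, sin_eq_0_1 in Hsc by (exists z; reflexivity). unfold Rsqr in Hsc. lra.
Qed.

Lemma cos_plus_IZR_PI x z : cos (x + IZR z * PI) = cos x * cos (IZR z * PI).
Proof. rewrite cos_plus, (sin_eq_0_1 (IZR z * PI)) by (exists z; reflexivity). ring. Qed.

Lemma sin_plus_IZR_PI x z : sin (x + IZR z * PI) = sin x * cos (IZR z * PI).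
Proof. rewrite sin_plus, (sin_eq_0_1 (IZR z * PI)) by (exists z; reflexivity). ring. Qed.

Lemma cos_plus_IZR_PI_neq0 x z : cos x <> 0 -> cos (x + IZR z * PI) <> 0.
Proof.
  intros Hx. rewrite cos_plus_IZR_PI.
  apply Rmult_integral_contrapositive; split; auto using cos_IZR_PI_neq0.
Qed.

Lemma tan_plus_IZR_PI x z : cos x <> 0 -> tan (x + IZR z * PI) = tan x.
Proof.
  intros Hx. unfold tan. rewrite cos_plus_IZR_PI, sin_plus_IZR_PI.
  field. split; auto using cos_IZR_PI_neq0.
Qed.

Lemma tan_branch_cos_neq0 z a : tan_branch z a -> cos a <> 0.
Proof.
  intros H. replace a with ((a - IZR z * PI) + IZR z * PI) by ring.
  apply cos_plus_IZR_PI_neq0, Rgt_not_eq, cos_gt_0; unfold tan_branch in H; lra.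
Qed.

Lemma tan_branch_exists a : cos a <> 0 -> exists z, tan_branch z a.
Proof.
  intros Hc. pose proof PI_RGT_0 as Hpi.
  destruct (archimed (a / PI + / 2)) as [H1 H2].
  set (n := up (a / PI + / 2)) in *.
  assert (Ha : a = (a / PI + / 2) * PI - PI / 2) by (field; lra).
  assert (B1 : a < IZR n * PI - PI / 2).
  { rewrite Ha. apply Rplus_lt_compat_r, Rmult_lt_compat_r; lra. }
  assert (B2 : (IZR n - 1) * PI - PI / 2 <= a).
  { rewrite Ha. apply Rplus_le_compat_r, Rmult_le_compat_r; lra. }
  exists (n - 1)%Z. unfold tan_branch. rewrite minus_IZR. split; [|lra].
  destruct (Rle_lt_or_eq_dec _ _ B2) as [B2'|B2']; auto.
  exfalso. apply Hc, cos_eq_0_1. exists (n - 2)%Z. rewrite minus_IZR, <- B2'. lra.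
Qed.

Lemma tan_branch_atan z u : tan_branch z (atan u + IZR z * PI).
Proof. destruct (atan_bound u). unfold tan_branch. lra. Qed.

Lemma atan_tan_branch z a : tan_branch z a -> atan (tan a) + IZR z * PI = a.
Proof.
  intros H. unfold tan_branch in H.
  replace (tan a) with (tan (a - IZR z * PI)).
  - rewrite atan_tan by lra. ring.
  - replace a with ((a - IZR z * PI) + IZR z * PI) at 2 by ring.
    symmetry; apply tan_plus_IZR_PI, Rgt_not_eq, cos_gt_0; lra.
Qed.

Lemma cos_atan_neq0 u : cos (atan u) <> 0.
Proof.
  apply Rgt_not_eq. rewrite cos_atan. apply Rdiv_lt_0_compat; [lra|].
  apply sqrt_lt_R0. pose proof (Rle_0_sqr u). lra.
Qed.

(** * The coordinate change [Phi] *)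

Definition Phi_fexpr (l : R) (k : idx) : fexpr :=
  let sec e := FInv (FCos e) in
  match k with
  | I1 => FVar I1
  | I2 => FVar I2
  | I3 => FMul (FSin (FVar I3)) (sec (FVar I3))
  | I4 => FMul (FMul (FConst (- / l)) (FMul (FSin (FVar I4)) (sec (FVar I4))))
               (FMul (sec (FVar I3)) (FMul (sec (FVar I3)) (sec (FVar I3))))
  end.

Lemma coord_Phi l k m : coord (Phi l m) k = feval (Phi_fexpr l k) m.
Proof. destruct m as [[[x y] a] b]; destruct k; simpl; unfold tan, Rdiv; ring. Qed.

Lemma Phi_fexpr_defined l k m : Mdom m -> fdefined (Phi_fexpr l k) m.
Proof. intros [Ha Hb]; destruct k; simpl; tauto. Qed.

Lemma pd_Phi l i k m : Mdom m ->
  pd i (fun q => coord (Phi l q) k) m = feval (fderiv i (Phi_fexpr l k)) m.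
Proof. intros Hm. apply pd_feval; [intro; apply coord_Phi | apply Phi_fexpr_defined; auto]. Qed.

(* [K] and [J] select the branches of [atan] inverting [tan] near the base point. *)
Definition Phi_inv (l K J : R) (n : pt) : pt :=
  let al := atan (coord n I3) + K in
  (coord n I1, coord n I2, al, atan (- l * coord n I4 * cos al ^ 3) + J).

Definition Phi_inv_fexpr (l K J : R) (k : idx) : fexpr :=
  let al := FAdd (FAtan (FVar I3)) (FConst K) in
  match k with
  | I1 => FVar I1
  | I2 => FVar I2
  | I3 => al
  | I4 => FAdd (FAtan (FMul (FMul (FConst (- l)) (FVar I4))
                            (FMul (FCos al) (FMul (FCos al) (FCos al)))))
               (FConst J)
  end.

Lemma coord_Phi_inv l K J k n : coord (Phi_inv l K J n) k = feval (Phi_inv_fexpr l K J k) n.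
Proof.
  destruct n as [[[x y] p] q]; destruct k; simpl; try reflexivity.
  do 2 f_equal. ring.
Qed.

Definition tan_branch_box (z j : Z) (m : pt) : Prop :=
  tan_branch z (coord m I3) /\ tan_branch j (coord m I4).

Lemma open_coord_between i c d : open (fun m : pt => c < coord m i < d).
Proof.
  apply (open_and (fun m => c < coord m i) (fun m => coord m i < d)).
  - apply (open_comp (fun m => coord m i) (fun u => c < u)).
    + intros; apply continuous_coord.
    + apply open_gt.
  - apply (open_comp (fun m => coord m i) (fun u => u < d)).
    + intros; apply continuous_coord.
    + apply open_lt.
Qed.

Lemma open_tan_branch_box z j : open (tan_branch_box z j).
Proof. apply open_and; apply open_coord_between. Qed.

Lemma tan_branch_box_Mdom z j m : tan_branch_box z j m -> Mdom m.
Proof. intros [H3 H4]; split; eapply tan_branch_cos_neq0; eauto. Qed.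

Lemma Phi_local_diffeo_box l z j : l <> 0 ->
  local_diffeo (tan_branch_box z j) (fun _ => True) (Phi l) (Phi_inv l (IZR z * PI) (IZR j * PI)).
Proof.
  intros hl.
  refine (conj _ (conj _ (conj _ (conj _ (conj _ (conj _ (conj _ _))))))).
  - apply open_tan_branch_box.
  - apply open_true.
  - intros; exact I.
  - intros q _. split; apply tan_branch_atan.
  - intros p Hp. destruct (tan_branch_box_Mdom z j p Hp) as [Ha Hb]. destruct Hp as [H3 H4].
    destruct p as [[[x y] a] b]. simpl in *. unfold Phi_inv, Phi. cbn -[pow].
    rewrite (atan_tan_branch z a H3).
    replace (- l * (- / l * tan b * (/ cos a) ^ 3) * cos a ^ 3) with (tan b)
      by (field; split; assumption).
    rewrite (atan_tan_branch j b H4). reflexivity.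
  - intros [[[x y] p] q] _. unfold Phi_inv, Phi. simpl.
    assert (Hc : cos (atan p + IZR z * PI) <> 0) by apply cos_plus_IZR_PI_neq0, cos_atan_neq0.
    rewrite !tan_plus_IZR_PI, !tan_atan by apply cos_atan_neq0.
    f_equal. field. auto.
  - intro k. apply (smooth_on_feval _ _ (Phi_fexpr l k)).
    + apply open_tan_branch_box.
    + intros; apply coord_Phi.
    + intros p Hp. apply Phi_fexpr_defined, (tan_branch_box_Mdom z j); auto.
  - intro k. apply (smooth_on_feval _ _ (Phi_inv_fexpr l (IZR z * PI) (IZR j * PI) k)).
    + apply open_true.
    + intros; apply coord_Phi_inv.
    + intros; destruct k; simpl; tauto.
Qed.

Lemma Phi_local_diffeo l : l <> 0 -> forall m, Mdom m ->
  exists V W G, V m /\ (forall p, V p -> Mdom p) /\ local_diffeo V W (Phi l) G.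
Proof.
  intros hl m [Ha Hb].
  destruct (tan_branch_exists _ Ha) as [z Hz], (tan_branch_exists _ Hb) as [j Hj].
  exists (tan_branch_box z j), (fun _ => True), (Phi_inv l (IZR z * PI) (IZR j * PI)).
  split; [split; auto|]. split.
  - apply tan_branch_box_Mdom.
  - apply Phi_local_diffeo_box; auto.
Qed.

Lemma same_span_scal4 c v w : c <> 0 -> v = scal4 c w -> same_span v w.
Proof.
  assert (Hss : forall a b u, scal4 a (scal4 b u) = scal4 (a * b) u)
    by (intros a b [[[? ?] ?] ?]; unfold scal4, vec4; simpl;
        f_equal; [f_equal; [f_equal|]|]; ring).
  intros Hc -> u. split; intros [t ->].
  - exists (t * c). apply Hss.
  - exists (t / c). rewrite Hss. f_equal. field. auto.
Qed.

Lemma push_Phi_X3 l m : l <> 0 -> Mdom m ->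
  push (Phi l) m (X3 m)
  = scal4 (- / (l * cos (coord m I4) ^ 2 * cos (coord m I3) ^ 3)) (vert (Phi l m)).
Proof.
  intros hl Hm. unfold push, vec4. rewrite !pd_Phi by auto.
  destruct Hm as [Ha Hb]. destruct m as [[[x y] a] b]. simpl in *.
  unfold scal4, vec4, vert. simpl. f_equal; [f_equal; [f_equal|]|]; try ring.
  pose proof (sin2_cos2 b) as Hsc. unfold Rsqr in Hsc.
  field_simplify; [|auto..]. rewrite <- Hsc. field. auto.
Qed.

Lemma push_Phi_X4 l m : l <> 0 -> Mdom m ->
  push (Phi l) m (X4 l m)
  = scal4 (l * cos (coord m I4) * cos (coord m I3)) (totD Fode (Phi l m)).
Proof.
  intros hl Hm. unfold push, vec4. rewrite !pd_Phi by auto.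
  destruct Hm as [Ha Hb]. destruct m as [[[x y] a] b]. simpl in *.
  unfold scal4, vec4, totD, Fode, Phi, tan. simpl.
  assert (Hsa : sin a * sin a = 1 - cos a * cos a)
    by (pose proof (sin2_cos2 a) as H; unfold Rsqr in H; lra).
  assert (Hp : 1 + sin a / cos a * (sin a / cos a * 1) = / (cos a * cos a)).
  { transitivity ((cos a * cos a + sin a * sin a) / (cos a * cos a)); [field; auto|].
    rewrite Hsa. field. auto. }
  rewrite Hp. f_equal; [f_equal; [f_equal|]|]; try (field; auto).
  transitivity (- sin b * ((cos a * cos a + sin a * sin a) / (cos a * cos a))); [field; auto|].
  rewrite Hsa. field. auto.
Qed.

Lemma Phi_carries_split l : l <> 0 -> carries_split Mdom (Phi l) X3 (X4 l) vert (totD Fode).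
Proof.
  intros hl m Hm. pose proof Hm as [Ha Hb]. split.
  - eapply same_span_scal4; [|apply push_Phi_X3; auto].
    apply Ropp_neq_0_compat, Rinv_neq_0_compat.
    repeat apply Rmult_integral_contrapositive_currified; auto using pow_nonzero.
  - eapply same_span_scal4; [|apply push_Phi_X4; auto].
    repeat apply Rmult_integral_contrapositive_currified; auto.
Qed.

Lemma Phi_loc_equiv_split l : l <> 0 -> loc_equiv_split Mdom X3 (X4 l) J2 vert (totD Fode).
Proof.
  intros hl m Hm. destruct (Phi_local_diffeo l hl m Hm) as [V [W [G [HVm [HVM HG]]]]].
  exists V, W, (Phi l), G.
  split; [auto|]. split; [auto|]. split; [intros; exact I|]. split; [auto|].
  intros p Hp. apply Phi_carries_split; auto.
Qed.

(** * Solutions of [y''' = 3 y' y''^2 / (1 + y'^2)] are circles and lines *)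

Definition in_interval (a b : Rbar) (t : R) : Prop := Rbar_lt a t /\ Rbar_lt t b.

Lemma in_interval_between a b x y z :
  in_interval a b x -> in_interval a b y -> Rmin x y <= z <= Rmax x y -> in_interval a b z.
Proof.
  intros [H1 H2] [H3 H4] Hz. split.
  - destruct a as [a| |]; simpl in *; try tauto.
    assert (a < Rmin x y) by (apply Rmin_glb_lt; auto). lra.
  - destruct b as [b| |]; simpl in *; try tauto.
    assert (Rmax x y < b) by (apply Rmax_lub_lt; auto). lra.
Qed.

Lemma in_interval_locally a b x : in_interval a b x -> locally x (in_interval a b).
Proof.
  apply (open_and (T := R_UniformSpace) (fun t : R => Rbar_lt a t) (fun t : R => Rbar_lt t b)).
  - apply open_Rbar_gt.
  - apply open_Rbar_lt.
Qed.

Lemma is_derive_0_const_on a b (f : R -> R) :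
  (forall x, in_interval a b x -> is_derive f x 0) ->
  forall x y, in_interval a b x -> in_interval a b y -> f x = f y.
Proof.
  intros Hd x y Hx Hy.
  assert (Hxy : forall z, Rmin x y <= z <= Rmax x y -> in_interval a b z)
    by (intros; apply (in_interval_between a b x y); auto).
  destruct (MVT_gen f x y (fun _ => 0)) as [c [_ Hc]].
  - intros z Hz. apply Hd, Hxy. lra.
  - intros z Hz. apply continuity_pt_filterlim, (ex_derive_continuous f).
    exists 0. apply Hd, Hxy; auto.
  - lra.
Qed.

Lemma is_derive_of_zero_on a b (g : R -> R) x d :
  (forall t, in_interval a b t -> g t = 0) -> in_interval a b x -> is_derive g x d -> d = 0.
Proof.
  intros Hg Hx Hd. apply is_derive_unique in Hd. rewrite <- Hd.
  rewrite (Derive_ext_loc _ (fun _ => 0)) by (generalize (in_interval_locally a b x Hx);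
    apply filter_imp; auto).
  apply Derive_const.
Qed.

Definition circle_eq (nu xi eta mu x Y : R) : R :=
  nu * (x ^ 2 + Y ^ 2) - 2 * xi * x - 2 * eta * Y + mu.

Definition on_circle_or_line (a b : Rbar) (y : R -> R) : Prop :=
  exists nu xi eta mu, (nu, xi, eta, mu) <> (0, 0, 0, 0) /\
    forall x : R, Rbar_lt a x -> Rbar_lt x b -> circle_eq nu xi eta mu x (y x) = 0.

Lemma one_plus_sqr_pos p : 0 < 1 + p ^ 2.
Proof. pose proof (pow2_ge_0 p). lra. Qed.

Section ThirdOrder.
Variables (a b : Rbar) (y P Q T : R -> R).
Hypothesis y_deriv : forall t, in_interval a b t -> is_derive y t (P t).
Hypothesis P_deriv : forall t, in_interval a b t -> is_derive P t (Q t).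
Hypothesis Q_deriv : forall t, in_interval a b t -> is_derive Q t (T t).

Lemma Derive_y t : in_interval a b t -> Derive y t = P t.
Proof. intros; apply is_derive_unique, y_deriv; auto. Qed.
Lemma Derive_P t : in_interval a b t -> Derive P t = Q t.
Proof. intros; apply is_derive_unique, P_deriv; auto. Qed.
Lemma Derive_Q t : in_interval a b t -> Derive Q t = T t.
Proof. intros; apply is_derive_unique, Q_deriv; auto. Qed.

Lemma ex_derive_y t : in_interval a b t -> ex_derive y t.
Proof. intros; eexists; apply y_deriv; auto. Qed.
Lemma ex_derive_P t : in_interval a b t -> ex_derive P t.
Proof. intros; eexists; apply P_deriv; auto. Qed.
Lemma ex_derive_Q t : in_interval a b t -> ex_derive Q t.
Proof. intros; eexists; apply Q_deriv; auto. Qed.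

#[local] Hint Resolve ex_derive_y ex_derive_P ex_derive_Q : core.

Ltac auto_derive_along :=
  auto_derive; [repeat split; auto .. | rewrite ?Derive_y, ?Derive_P, ?Derive_Q by auto].

Section CircleSolves.
Variables nu xi eta mu : R.
Hypothesis on_circle : forall t, in_interval a b t -> circle_eq nu xi eta mu t (y t) = 0.

Lemma circle_eq_deriv1 t : in_interval a b t -> nu * t + nu * y t * P t - xi - eta * P t = 0.
Proof.
  intros Ht. cut (2 * (nu * t + nu * y t * P t - xi - eta * P t) = 0); [lra|].
  apply (is_derive_of_zero_on a b _ t _ on_circle Ht). unfold circle_eq.
  auto_derive_along. ring.
Qed.

Lemma circle_eq_deriv2 t : in_interval a b t -> nu * (1 + P t ^ 2 + y t * Q t) - eta * Q t = 0.
Proof.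
  intros Ht. apply (is_derive_of_zero_on a b _ t _ circle_eq_deriv1 Ht).
  auto_derive_along. ring.
Qed.

Lemma circle_eq_deriv3 t : in_interval a b t -> nu * (3 * P t * Q t + y t * T t) - eta * T t = 0.
Proof.
  intros Ht. apply (is_derive_of_zero_on a b _ t _ circle_eq_deriv2 Ht).
  auto_derive_along. ring.
Qed.

Lemma circle_solves_ode : (nu, xi, eta, mu) <> (0, 0, 0, 0) ->
  forall t, in_interval a b t -> T t = 3 * P t * Q t ^ 2 / (1 + P t ^ 2).
Proof.
  intros Hnz t Ht.
  pose proof (circle_eq_deriv2 t Ht) as E2. pose proof (circle_eq_deriv3 t Ht) as E3.
  pose proof (one_plus_sqr_pos (P t)) as Hp.
  (* with [W = nu y - eta]: E2 is [nu (1 + P^2) + W Q = 0] and E3 is [3 nu P Q + W T = 0] *)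
  destruct (Req_dec (nu * y t - eta) 0) as [HW|HW].
  - exfalso. apply Hnz.
    assert (Hnu : nu = 0) by nra.
    assert (Heta : eta = 0) by (rewrite Hnu in HW; lra).
    pose proof (circle_eq_deriv1 t Ht) as E1. rewrite Hnu, Heta in E1.
    assert (Hxi : xi = 0) by lra.
    pose proof (on_circle t Ht) as Hc. unfold circle_eq in Hc. rewrite Hnu, Hxi, Heta in Hc.
    assert (Hmu : mu = 0) by lra.
    rewrite Hnu, Hxi, Heta, Hmu. reflexivity.
  - assert (HT : T t = - 3 * nu * P t * Q t / (nu * y t - eta))
      by (field_simplify_eq; [nra | auto]).
    assert (HQ : Q t = - nu * (1 + P t ^ 2) / (nu * y t - eta))
      by (field_simplify_eq; [nra | auto]).
    rewrite HT, HQ. field. lra.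
Qed.

End CircleSolves.

Section SolutionsAreCircles.
Hypothesis ode : forall t, in_interval a b t -> T t = 3 * P t * Q t ^ 2 / (1 + P t ^ 2).

Lemma ode_curvature_const t s : in_interval a b t -> in_interval a b s ->
  Q t ^ 2 / (1 + P t ^ 2) ^ 3 = Q s ^ 2 / (1 + P s ^ 2) ^ 3.
Proof.
  apply (is_derive_0_const_on a b (fun t => Q t ^ 2 / (1 + P t ^ 2) ^ 3)).
  intros u Hu.
  assert (Hp : 0 < 1 + P u * (P u * 1)) by (pose proof (one_plus_sqr_pos (P u)); simpl in *; lra).
  auto_derive_along.
  - repeat apply Rmult_integral_contrapositive_currified; lra.
  - rewrite (ode u Hu). field. lra.
Qed.

Lemma ode_solution_line x0 : in_interval a b x0 -> Q x0 = 0 -> on_circle_or_line a b y.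
Proof.
  intros Hx0 Hq0.
  assert (HQ : forall t, in_interval a b t -> Q t = 0).
  { intros t Ht. pose proof (ode_curvature_const t x0 Ht Hx0) as H.
    rewrite Hq0 in H. unfold Rdiv in H. rewrite pow_i, Rmult_0_l in H by auto.
    apply Rmult_integral in H. destruct H as [H|H]; [simpl in H; nra|].
    exfalso. revert H. apply Rinv_neq_0_compat, pow_nonzero, Rgt_not_eq, one_plus_sqr_pos. }
  assert (HP : forall t, in_interval a b t -> P t = P x0).
  { intros t Ht. apply (is_derive_0_const_on a b P); auto.
    intros s Hs. rewrite <- (HQ s Hs). auto. }
  assert (HL : forall t, in_interval a b t -> y t - P x0 * t = y x0 - P x0 * x0).
  { intros t Ht. apply (is_derive_0_const_on a b (fun t => y t - P x0 * t)); auto.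
    intros s Hs. auto_derive_along. rewrite HP by auto. ring. }
  exists 0, (- P x0 / 2), (1 / 2), (y x0 - P x0 * x0). split.
  - intro H. injection H. lra.
  - intros x H1 H2. unfold circle_eq. pose proof (HL x (conj H1 H2)). field_simplify. lra.
Qed.

Lemma ode_solution_circle x0 : in_interval a b x0 -> Q x0 <> 0 -> on_circle_or_line a b y.
Proof.
  intros Hx0 Hq0.
  set (Z := fun t => Q t ^ 2 / (1 + P t ^ 2) ^ 3).
  assert (HZ0 : 0 < Z x0).
  { apply Rdiv_lt_0_compat; [apply pow2_gt_0; auto | apply pow_lt, one_plus_sqr_pos]. }
  assert (HQ : forall t, in_interval a b t -> Q t <> 0).
  { intros t Ht Hqt. pose proof (ode_curvature_const t x0 Ht Hx0) as H. fold (Z x0) in H.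
    rewrite Hqt in H. unfold Rdiv in H. rewrite pow_i, Rmult_0_l in H by auto. lra. }
  (* the centre of curvature *)
  set (Xc := fun t => t - P t * (1 + P t ^ 2) / Q t).
  set (Yc := fun t => y t + (1 + P t ^ 2) / Q t).
  assert (HX : forall t, in_interval a b t -> Xc t = Xc x0).
  { intros t Ht. apply (is_derive_0_const_on a b Xc); auto. intros s Hs.
    pose proof (one_plus_sqr_pos (P s)). pose proof (HQ s Hs).
    unfold Xc. auto_derive_along. rewrite (ode s Hs). field. split; lra. }
  assert (HY : forall t, in_interval a b t -> Yc t = Yc x0).
  { intros t Ht. apply (is_derive_0_const_on a b Yc); auto. intros s Hs.
    pose proof (one_plus_sqr_pos (P s)). pose proof (HQ s Hs).
    unfold Yc. auto_derive_along. rewrite (ode s Hs). field. split; lra. }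
  exists 1, (Xc x0), (Yc x0), (Xc x0 ^ 2 + Yc x0 ^ 2 - / Z x0). split.
  - intro H. injection H. lra.
  - intros x H1 H2. assert (Hx : in_interval a b x) by (split; auto). unfold circle_eq.
    rewrite <- (HX x Hx), <- (HY x Hx). unfold Xc, Yc, Z. cbv beta.
    rewrite <- (ode_curvature_const x x0 Hx Hx0).
    pose proof (one_plus_sqr_pos (P x)). pose proof (HQ x Hx).
    field. split; [lra | auto].
Qed.

Lemma ode_solution_on_circle_or_line : on_circle_or_line a b y.
Proof.
  destruct (classic (exists x0, in_interval a b x0)) as [[x0 Hx0]|Hempty].
  - destruct (Req_dec (Q x0) 0).
    + apply (ode_solution_line x0); auto.
    + apply (ode_solution_circle x0); auto.
  - exists 1, 0, 0, 0. split.
    + intro H. injection H. lra.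
    + intros x H1 H2. exfalso. apply Hempty. exists x. split; auto.
Qed.

End SolutionsAreCircles.
End ThirdOrder.

Lemma C3_on_is_derive a b y t : C3_on a b y -> in_interval a b t ->
  is_derive y t (Derive_n y 1 t) /\ is_derive (Derive_n y 1) t (Derive_n y 2 t) /\
  is_derive (Derive_n y 2) t (Derive_n y 3 t).
Proof.
  intros Hy [H1 H2]. destruct (Hy t H1 H2) as [E1 [E2 E3]].
  split; [|split]; apply Derive_correct; assumption.
Qed.

Theorem mainTheorem2 (l : R) (hl : 0 < l) :
  (* Phi is a local diffeomorphism on M = {cos alpha <> 0, cos beta <> 0} *)
  (forall m, Mdom m ->
     exists V W G, V m /\ (forall p, V p -> Mdom p) /\ local_diffeo V W (Phi l) G)
  (* dPhi maps Span(X3) to Span(d_q) and Span(X4) to Span(total derivative) *)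
  /\ carries_split Mdom (Phi l) X3 (X4 l) vert (totD Fode)
  (* hence the two Engel structures with split are locally equivalent *)
  /\ loc_equiv_split Mdom X3 (X4 l) J2 vert (totD Fode)
  (* every solution lies on a circle or a line ... *)
  /\ (forall (a b : Rbar) (y : R -> R), solves_ode Fode a b y ->
        exists nu xi eta mu, (nu, xi, eta, mu) <> (0, 0, 0, 0) /\
          forall x : R, Rbar_lt a x -> Rbar_lt x b ->
            nu * (x ^ 2 + (y x) ^ 2) - 2 * xi * x - 2 * eta * y x + mu = 0)
  (* ... and conversely every such (C^3) curve is a solution *)
  /\ (forall (a b : Rbar) (y : R -> R) (nu xi eta mu : R),
        (nu, xi, eta, mu) <> (0, 0, 0, 0) -> C3_on a b y ->
        (forall x : R, Rbar_lt a x -> Rbar_lt x b ->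
            nu * (x ^ 2 + (y x) ^ 2) - 2 * xi * x - 2 * eta * y x + mu = 0) ->
        solves_ode Fode a b y).
Proof.
  assert (hl0 : l <> 0) by lra.
  split; [apply Phi_local_diffeo; auto|].
  split; [apply Phi_carries_split; auto|].
  split; [apply Phi_loc_equiv_split; auto|].
  split.
  - intros a b y [Hy Hode].
    apply (ode_solution_on_circle_or_line a b y (Derive_n y 1) (Derive_n y 2) (Derive_n y 3));
      intros t Ht; try apply (C3_on_is_derive a b y t Hy Ht).
    destruct Ht as [H1 H2]. apply (Hode t H1 H2).
  - intros a b y nu xi eta mu Hnz Hy Hcircle. split; auto. intros x H1 H2.
    apply (circle_solves_ode a b y (Derive_n y 1) (Derive_n y 2) (Derive_n y 3)) with nu xi eta mu;
      try (intros t Ht; apply (C3_on_is_derive a b y t Hy Ht)).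
    + intros t [G1 G2]. apply Hcircle; auto.
    + exact Hnz.
    + split; auto.
Qed.
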